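(* Let $f:[0,\infty)\to[0,\infty)$ be continuously differentiable with $f>0$ on $[t_0,\infty)$ for some $t_0\ge0$ and $f\in C^2([t_0,\infty))$, let $g=\log f$ on $[t_0,\infty)$, and assume condition (H1) of the context. Then for every $M>0$, $$\lim_{t\to\infty}\sup_{-M\le y\le M}\left|g\Big(t+\frac{y}{g'(t)}\Big)-g(t)-y\right|=0,$$ and in particular $$\lim_{t\to\infty}\sup_{-M\le y\le M}\left|\frac{f\big(t+\frac{y}{g'(t)}\big)}{f(t)}-e^{y}\right|=0=\lim_{t\to\infty}\sup_{-M\le y\le M}\left|\frac{f'\big(t+\frac{y}{g'(t)}\big)}{f'(t)}-e^{y}\right|.$$
   Context: Condition (H1): (i) $g'(t)>0$ and $g''(t)>0$ for all $t\ge t_0$, and there is a pair $(q,p)$ with either $q=1$ and $p\in(0,\infty]$, or $q\in(1,\infty)$ and $p\in(0,\infty)$, such that $\lim_{t\to\infty}\frac{g'(t)^2}{g(t)g''(t)}=q$ and $\lim_{t\to\infty}\frac{tg'(t)}{g(t)}=p$; (ii) if $q=1$, then $tg'(t)/g(t)$ is nondecreasing on $[t_0,\infty)$ and there exist $k\in\mathbb{N}$ and $\hat g\in C^2([t_0,\infty))$ with $f=\exp_k\circ\hat g$ and $\hat g'/\hat g$ nonincreasing on $[t_0,\infty)$ ($\exp_1=\exp$, $\exp_k=\exp_{k-1}\circ\exp$). *)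

From Stdlib Require Import Reals.
From Coquelicot Require Import Coquelicot.
Open Scope R_scope.

Definition deriv_on_Ici (F F' : R -> R) (a : R) : Prop :=
  (forall t, a < t -> is_derive F t (F' t)) /\
  filterlim (fun h => (F (a + h) - F a) / h) (at_right 0) (locally (F' a)).

Definition cont_on_Ici (F : R -> R) (a : R) : Prop :=
  forall t, a <= t ->
    filterlim F (within (fun x => a <= x) (locally t)) (locally (F t)).

Fixpoint expk (k : nat) : R -> R :=
  match k with
  | O => fun x => x
  | S k' => fun x => expk k' (exp x)
  end.

Definition sup_abs (M : R) (h : R -> R) : Rbar :=
  Lub_Rbar (fun z => exists y, -M <= y <= M /\ z = Rabs (h y)).

(* By (H1), g g'' <= 2 g'^2 eventually, so the derivative of 1/g' is at most 2/g in size.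
   On the window |s - t| <= M/g'(t), where g drops by at most M below g(t), this gives
   1/g'(s) = (1 + O(M/g(t)))/g'(t); as g -> oo, g'(s)/g'(t) -> 1 uniformly.  The mean
   value theorem then writes g(t + y/g'(t)) - g(t) - y as y (g'(c)/g'(t) - 1), and the
   statements for f = exp g and f' = f g' follow. *)

From Stdlib Require Import Reals Lra Psatz.
From Coquelicot Require Import Coquelicot.
Open Scope R_scope.

Lemma sup_abs_bounded M (h : R -> R) (b : R) : 0 <= M ->
  (forall y, -M <= y <= M -> Rabs (h y) <= b) ->
  exists r, sup_abs M h = Finite r /\ 0 <= r <= b.
Proof.
  intros hM hb. unfold sup_abs.
  set (E := fun z => exists y, -M <= y <= M /\ z = Rabs (h y)).
  destruct (Lub_Rbar_correct E) as [ub lub].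
  assert (h0 : E (Rabs (h 0))) by (exists 0; split; [lra | reflexivity]).
  assert (hb' : is_ub_Rbar E b) by (intros z [y [hy ->]]; apply hb, hy).
  specialize (ub _ h0). specialize (lub _ hb').
  destruct (Lub_Rbar E) as [r| |]; simpl in ub, lub; try contradiction.
  exists r. pose proof (Rabs_pos (h 0)). split; [reflexivity | lra].
Qed.

Lemma sup_abs_lim_0 {T : Type} (F : (T -> Prop) -> Prop) {FF : Filter F}
    M (H : T -> R -> R) (B : T -> R) :
  0 <= M ->
  F (fun t => forall y, -M <= y <= M -> Rabs (H t y) <= B t) ->
  filterlim B F (locally 0) ->
  filterlim (fun t => sup_abs M (H t)) F (Rbar_locally (Finite 0)).
Proof.
  intros hM hbound hB P [eps hP].
  apply (proj1 (filterlim_locally _ _)) with (eps := eps) in hB.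
  unfold filtermap. generalize (filter_and _ _ hbound hB). apply filter_imp.
  intros t [hb hBt].
  destruct (sup_abs_bounded M (H t) (B t) hM hb) as [r [-> hr]].
  apply hP. revert hBt.
  unfold ball; simpl; unfold AbsRing_ball, abs, minus, plus, opp; simpl.
  rewrite Ropp_0, !Rplus_0_r, !Rabs_pos_eq by lra. lra.
Qed.

Lemma is_lim_0_eventually_le (h : R -> R) e : is_lim h p_infty 0 -> 0 < e ->
  Rbar_locally p_infty (fun t => h t <= e).
Proof.
  intros hlim he.
  destruct (proj2 (is_lim_spec _ _ _) hlim (mkposreal e he)) as [T hT].
  exists T. intros t ht. specialize (hT t ht). apply Rabs_lt_between in hT. simpl in hT. lra.
Qed.

Lemma half_line_MVT (a : R) (F F' : R -> R) x y :
  (forall t, a < t -> is_derive F t (F' t)) -> a < x -> a < y ->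
  exists c, Rmin x y <= c <= Rmax x y /\ F y - F x = F' c * (y - x).
Proof.
  intros hF hx hy.
  assert (hmin : a < Rmin x y) by (apply Rmin_glb_lt; assumption).
  apply MVT_gen.
  - intros z hz. apply hF. lra.
  - intros z hz. apply continuity_pt_filterlim, (ex_derive_continuous (V := R_NormedModule)).
    exists (F' z). apply hF. lra.
Qed.

Lemma Rabs_sub_between x y c : Rmin x y <= c <= Rmax x y -> Rabs (c - x) <= Rabs (y - x).
Proof.
  unfold Rmin, Rmax. destruct (Rle_dec x y); intros hc; apply Rabs_le;
  unfold Rabs; destruct (Rcase_abs (y - x)); lra.
Qed.

Lemma exp_le_mono x y : x <= y -> exp x <= exp y.
Proof.
  intros hxy. destruct (Req_dec x y) as [-> | hne]; [lra |].
  apply Rlt_le, exp_increasing. lra.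
Qed.

Lemma exp_sub1_le d : Rabs d <= 1/2 -> Rabs (exp d - 1) <= 2 * Rabs d.
Proof.
  intros hd. apply Rabs_le_between in hd. pose proof (exp_ineq1_le d).
  destruct (Rle_or_lt 0 d) as [h | h].
  - (* [exp (-d) >= 1 - d] gives [exp d <= 1 / (1 - d) <= 1 + 2 d] for [d <= 1/2] *)
    pose proof (exp_ineq1_le (- d)) as hneg. rewrite exp_Ropp in hneg.
    pose proof (exp_pos d).
    assert ((1 - d) * exp d <= 1).
    { replace 1 with (/ exp d * exp d) at 2 by (field; lra).
      apply Rmult_le_compat_r; lra. }
    rewrite !Rabs_pos_eq; nra.
  - assert (exp d < 1) by (rewrite <- exp_0; apply exp_increasing; lra).
    rewrite Rabs_left, (Rabs_left d); lra.
Qed.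

Lemma Rabs_inv_sub1_le r e : 0 < r -> Rabs (r - 1) <= e -> e <= 1/2 ->
  Rabs (/ r - 1) <= 2 * e.
Proof.
  intros hr he he2. apply Rabs_le_between in he.
  replace (/ r - 1) with ((1 - r) / r) by (field; lra).
  rewrite Rabs_div by lra. rewrite (Rabs_pos_eq r) by lra.
  apply Rle_div_l; [lra |]. rewrite Rabs_minus_sym.
  apply Rabs_le. nra.
Qed.

Lemma Rabs_mul_sub_le X Y E : Rabs (Y - 1) <= 1 ->
  Rabs (X * Y - E) <= 2 * Rabs (X - E) + Rabs E * Rabs (Y - 1).
Proof.
  intros hY.
  replace (X * Y - E) with ((X - E) * Y + E * (Y - 1)) by ring.
  eapply Rle_trans; [apply Rabs_triang |]. rewrite !Rabs_mult.
  assert (Rabs Y <= 2).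
  { replace Y with ((Y - 1) + 1) by ring.
    eapply Rle_trans; [apply Rabs_triang |]. rewrite Rabs_R1. lra. }
  pose proof (Rabs_pos (X - E)). nra.
Qed.

Section ConvexIncreasing.

Variables (t0 : R) (g g1 g2 : R -> R).
Hypothesis g_deriv : forall t, t0 < t -> is_derive g t (g1 t).
Hypothesis g1_deriv : forall t, t0 < t -> is_derive g1 t (g2 t).
Hypothesis g1_pos : forall t, t0 < t -> 0 < g1 t.
Hypothesis g2_ge0 : forall t, t0 < t -> 0 <= g2 t.

Lemma g1_le x y : t0 < x -> x <= y -> g1 x <= g1 y.
Proof.
  intros hx hxy.
  destruct (half_line_MVT t0 g1 g2 x y g1_deriv hx ltac:(lra)) as [c [hc e]].
  rewrite Rmin_left in hc by lra.
  assert (0 <= g2 c) by (apply g2_ge0; lra).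
  nra.
Qed.

Lemma g_increment_bounds x y : t0 < x -> x <= y ->
  g1 x * (y - x) <= g y - g x <= g1 y * (y - x).
Proof.
  intros hx hxy.
  destruct (half_line_MVT t0 g g1 x y g_deriv hx ltac:(lra)) as [c [hc e]].
  rewrite Rmin_left, Rmax_right in hc by lra.
  assert (g1 x <= g1 c) by (apply g1_le; lra).
  assert (g1 c <= g1 y) by (apply g1_le; lra).
  rewrite e; split; apply Rmult_le_compat_r; lra.
Qed.

Lemma is_lim_g : is_lim g p_infty p_infty.
Proof.
  set (a := t0 + 1).
  assert (ha : 0 < g1 a) by (apply g1_pos; unfold a; lra).
  apply (is_lim_le_p_loc (fun t => g a + g1 a * (t - a))).
  - exists a. intros t ht.
    destruct (g_increment_bounds a t ltac:(unfold a; lra) ltac:(lra)). lra.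
  - eapply is_lim_plus; [apply is_lim_const | | ].
    + apply is_lim_scal_l. eapply is_lim_minus; [apply is_lim_id | apply is_lim_const |].
      reflexivity.
    + simpl. destruct (Rle_dec 0 (g1 a)) as [h |]; [| lra].
      destruct (Rle_lt_or_eq_dec 0 (g1 a) h); [reflexivity | lra].
Qed.

Lemma g_window_ge M t s : t0 < t -> t0 < s -> Rabs (s - t) <= M / g1 t ->
  g t - M <= g s.
Proof.
  intros ht hs hst.
  assert (hg1 : 0 < g1 t) by auto.
  assert (hM : g1 t * (M / g1 t) = M) by (field; lra).
  assert (0 <= g1 t * (M / g1 t)) by (pose proof (Rabs_pos (s - t)); nra).
  destruct (Rle_or_lt t s) as [hts | hst'].
  - destruct (g_increment_bounds t s ht hts). nra.
  - destruct (g_increment_bounds s t hs ltac:(lra)).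
    rewrite Rabs_left in hst by lra.
    assert (g1 t * (t - s) <= g1 t * (M / g1 t)) by (apply Rmult_le_compat_l; lra).
    lra.
Qed.

Lemma is_lim_window_err M : is_lim (fun t => 4 * M / (g t - M)) p_infty 0.
Proof.
  replace (Finite 0) with (Rbar_div (4 * M) p_infty) by (simpl; f_equal; ring).
  apply is_lim_div; [apply is_lim_const | | discriminate | exact I].
  eapply is_lim_minus; [apply is_lim_g | apply is_lim_const | reflexivity].
Qed.

Lemma ratio_bound_eventually q : 1 <= q ->
  is_lim (fun t => g1 t ^ 2 / (g t * g2 t)) p_infty q ->
  exists T, t0 < T /\ forall t, T <= t -> g t * g2 t <= 2 * g1 t ^ 2.
Proof.
  intros hq hlim.
  apply is_lim_spec in hlim.
  destruct (hlim (mkposreal (1/2) ltac:(lra))) as [T1 hT1].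
  destruct (proj2 (is_lim_spec _ _ _) is_lim_g 0) as [T2 hT2].
  exists (Rmax (t0 + 1) (Rmax T1 T2) + 1).
  split; [pose proof (Rmax_l (t0 + 1) (Rmax T1 T2)); lra |].
  intros t ht.
  pose proof (Rmax_l (t0 + 1) (Rmax T1 T2)); pose proof (Rmax_r (t0 + 1) (Rmax T1 T2)).
  pose proof (Rmax_l T1 T2); pose proof (Rmax_r T1 T2).
  assert (hg : 0 < g t) by (apply hT2; lra).
  assert (hg2 : 0 <= g2 t) by (apply g2_ge0; lra).
  specialize (hT1 t ltac:(lra)); simpl in hT1. apply Rabs_lt_between in hT1.
  destruct (Req_dec (g2 t) 0) as [-> | hne].
  - rewrite Rmult_0_r. nra.
  - assert (hpos : 0 < g t * g2 t) by (apply Rmult_lt_0_compat; lra).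
    assert (e : g1 t ^ 2 = g1 t ^ 2 / (g t * g2 t) * (g t * g2 t)) by (field; lra).
    rewrite e. nra.
Qed.

Section Window.

Variables (T1 M : R).
Hypothesis T1_gt : t0 < T1.
Hypothesis ratio_le : forall t, T1 <= t -> g t * g2 t <= 2 * g1 t ^ 2.
Hypothesis M_pos : 0 < M.

Let offset_pos : 0 < M / g1 T1.
Proof. apply Rdiv_lt_0_compat; auto. Qed.

Lemma window_ge_T1 t s : T1 + M / g1 T1 <= t -> Rabs (s - t) <= M / g1 t -> T1 <= s.
Proof.
  intros ht hst.
  assert (h1 : 0 < g1 T1) by auto.
  assert (M / g1 t <= M / g1 T1).
  { apply Rmult_le_compat_l; [lra |]. apply Rinv_le_contravar; [lra |].
    apply g1_le; lra. }
  apply Rabs_le_between in hst. lra.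
Qed.

Lemma inv_g1_window t s : T1 + M / g1 T1 <= t -> M < g t -> Rabs (s - t) <= M / g1 t ->
  Rabs (/ g1 s - / g1 t) <= 2 * M / (g t - M) * / g1 t.
Proof.
  intros ht hgt hst.
  assert (hs : T1 <= s) by (apply (window_ge_T1 t); assumption).
  assert (hinv : forall x, t0 < x -> is_derive (fun y => / g1 y) x (- g2 x / g1 x ^ 2)).
  { intros x hx. apply is_derive_inv; [apply g1_deriv, hx |]. apply Rgt_not_eq, g1_pos, hx. }
  destruct (half_line_MVT t0 _ _ t s hinv ltac:(lra) ltac:(lra)) as [c [hc e]].
  cbv beta in e. rewrite e.
  assert (hct : Rabs (c - t) <= M / g1 t)
    by (eapply Rle_trans; [apply Rabs_sub_between, hc | exact hst]).
  assert (hcT : T1 <= c) by (apply (window_ge_T1 t); assumption).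
  assert (hgc : g t - M <= g c) by (apply (g_window_ge M t c); lra).
  assert (hg1c : 0 < g1 c) by (apply g1_pos; lra).
  assert (hg2c : 0 <= g2 c) by (apply g2_ge0; lra).
  assert (hder : g2 c / g1 c ^ 2 <= 2 / (g t - M)).
  { apply Rle_div_l; [nra |]. unfold Rdiv.
    apply (Rmult_le_reg_l (g t - M)); [lra |].
    specialize (ratio_le c hcT).
    replace ((g t - M) * (2 * / (g t - M) * g1 c ^ 2)) with (2 * g1 c ^ 2) by (field; lra).
    nra. }
  replace (- g2 c / g1 c ^ 2 * (s - t)) with (- (g2 c / g1 c ^ 2 * (s - t))) by (field; lra).
  rewrite Rabs_Ropp, Rabs_mult, (Rabs_pos_eq (_ / _)) by (apply Rdiv_le_0_compat; nra).
  assert (0 < g1 t) by (apply g1_pos; lra).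
  replace (2 * M / (g t - M) * / g1 t) with (2 / (g t - M) * (M / g1 t)) by (field; lra).
  apply Rmult_le_compat; [apply Rdiv_le_0_compat; nra | apply Rabs_pos | lra | lra].
Qed.

Lemma g1_ratio_window t s : T1 + M / g1 T1 <= t -> 5 * M <= g t ->
  Rabs (s - t) <= M / g1 t -> Rabs (g1 s / g1 t - 1) <= 4 * M / (g t - M).
Proof.
  intros ht hgt hst.
  assert (hs : T1 <= s) by (apply (window_ge_T1 t); assumption).
  assert (hg1t : 0 < g1 t) by (apply g1_pos; lra).
  assert (hg1s : 0 < g1 s) by (apply g1_pos; lra).
  pose proof (inv_g1_window t s ht ltac:(lra) hst) as hinv.
  replace (g1 s / g1 t) with (/ (g1 t / g1 s)) by (field; lra).
  replace (4 * M / (g t - M)) with (2 * (2 * M / (g t - M))) by (field; lra).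
  apply Rabs_inv_sub1_le.
  - apply Rdiv_lt_0_compat; lra.
  - replace (g1 t / g1 s - 1) with (g1 t * (/ g1 s - / g1 t)) by (field; lra).
    rewrite Rabs_mult, Rabs_pos_eq by lra.
    apply (Rmult_le_reg_l (/ g1 t)); [apply Rinv_0_lt_compat; lra |].
    replace (/ g1 t * (g1 t * Rabs (/ g1 s - / g1 t))) with (Rabs (/ g1 s - / g1 t))
      by (field; lra).
    rewrite Rmult_comm. exact hinv.
  - apply Rle_div_l; lra.
Qed.

Lemma shift_in_window t y : t0 < t -> -M <= y <= M -> Rabs (t + y / g1 t - t) <= M / g1 t.
Proof.
  intros ht hy.
  assert (0 < g1 t) by auto.
  replace (t + y / g1 t - t) with (y / g1 t) by ring.
  rewrite Rabs_div, (Rabs_pos_eq (g1 t)) by lra.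
  apply Rmult_le_compat_r; [apply Rlt_le, Rinv_0_lt_compat; lra |].
  apply Rabs_le; lra.
Qed.

Lemma g_increment_window t y : T1 + M / g1 T1 <= t -> 5 * M <= g t -> -M <= y <= M ->
  Rabs (g (t + y / g1 t) - g t - y) <= M * (4 * M / (g t - M)).
Proof.
  intros ht hgt hy.
  assert (hg1t : 0 < g1 t) by (apply g1_pos; lra).
  pose proof (shift_in_window t y ltac:(lra) hy) as hwin.
  assert (T1 <= t + y / g1 t) by (apply (window_ge_T1 t); assumption).
  destruct (half_line_MVT t0 g g1 t (t + y / g1 t) g_deriv ltac:(lra) ltac:(lra))
    as [c [hc e]].
  assert (hct : Rabs (c - t) <= M / g1 t)
    by (eapply Rle_trans; [apply Rabs_sub_between, hc | exact hwin]).
  replace (g (t + y / g1 t) - g t - y) with (y * (g1 c / g1 t - 1))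
    by (rewrite e; field; lra).
  rewrite Rabs_mult.
  apply Rmult_le_compat; try apply Rabs_pos.
  - apply Rabs_le; lra.
  - apply (g1_ratio_window t c); assumption.
Qed.

Lemma window_estimates_eventually :
  Rbar_locally p_infty (fun t => t0 < t /\
    forall y, -M <= y <= M ->
      t0 < t + y / g1 t /\
      Rabs (g1 (t + y / g1 t) / g1 t - 1) <= 4 * M / (g t - M) /\
      Rabs (g (t + y / g1 t) - g t - y) <= M * (4 * M / (g t - M))).
Proof.
  destruct (proj2 (is_lim_spec _ _ _) is_lim_g (5 * M)) as [T2 hT2].
  exists (Rmax (T1 + M / g1 T1) T2). intros t ht.
  pose proof (Rmax_l (T1 + M / g1 T1) T2); pose proof (Rmax_r (T1 + M / g1 T1) T2).
  assert (ht1 : T1 + M / g1 T1 <= t) by lra.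
  assert (hgt : 5 * M <= g t) by (apply Rlt_le, hT2; lra).
  split; [lra |].
  intros y hy.
  pose proof (shift_in_window t y ltac:(lra) hy) as hwin.
  assert (T1 <= t + y / g1 t) by (apply (window_ge_T1 t); assumption).
  split; [lra | split].
  - apply (g1_ratio_window t); assumption.
  - apply g_increment_window; assumption.
Qed.

End Window.

End ConvexIncreasing.

Section LogDerivative.

Variables (t0 : R) (f f1 g g1 : R -> R).
Hypothesis f_pos : forall t, t0 <= t -> 0 < f t.
Hypothesis f_deriv : forall t, t0 < t -> is_derive f t (f1 t).
Hypothesis g_ln : forall t, t0 <= t -> g t = ln (f t).
Hypothesis g_deriv : forall t, t0 < t -> is_derive g t (g1 t).

Lemma f_eq_exp_g t : t0 <= t -> f t = exp (g t).
Proof. intros ht. rewrite g_ln, exp_ln; auto. Qed.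

Lemma f1_eq_mul t : t0 < t -> f1 t = f t * g1 t.
Proof.
  intros ht.
  assert (hf : 0 < f t) by (apply f_pos; lra).
  assert (hd : is_derive g t (f1 t * / f t)).
  { apply (is_derive_ext_loc (fun u => ln (f u))).
    - exists (mkposreal (t - t0) ltac:(lra)). intros u hu.
      apply Rabs_lt_between in hu. simpl in hu. unfold minus, plus, opp in hu; simpl in hu.
      symmetry. apply g_ln. lra.
    - apply (is_derive_comp ln f t (/ f t) (f1 t)); [apply is_derive_ln, hf | apply f_deriv, ht]. }
  assert (e : g1 t = f1 t * / f t)
    by (rewrite <- (is_derive_unique _ _ _ hd); symmetry; apply is_derive_unique, g_deriv, ht).
  rewrite e. field. lra.
Qed.

Lemma f_ratio_bound M t s y d : t0 <= t -> t0 <= s -> y <= M ->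
  Rabs (g s - g t - y) <= d -> d <= 1/2 ->
  Rabs (f s / f t - exp y) <= 2 * exp M * d.
Proof.
  intros ht hs hy hd hd2.
  rewrite !f_eq_exp_g by assumption.
  replace (exp (g s) / exp (g t) - exp y) with (exp y * (exp (g s - g t - y) - 1)).
  2: { unfold Rminus. rewrite !exp_plus, !exp_Ropp. field. split; apply Rgt_not_eq, exp_pos. }
  pose proof (exp_pos y). pose proof (exp_le_mono y M hy).
  pose proof (exp_sub1_le (g s - g t - y) ltac:(lra)).
  pose proof (Rabs_pos (exp (g s - g t - y) - 1)).
  rewrite Rabs_mult, (Rabs_pos_eq (exp y)) by lra.
  nra.
Qed.

Lemma f1_ratio_bound M t s y d e : t0 < t -> t0 < s -> 0 < g1 t -> y <= M ->
  Rabs (g s - g t - y) <= d -> d <= 1/2 ->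
  Rabs (g1 s / g1 t - 1) <= e -> e <= 1 ->
  Rabs (f1 s / f1 t - exp y) <= exp M * (4 * d + e).
Proof.
  intros ht hs hg1 hy hd hd2 he he1.
  assert (0 < f t) by (apply f_pos; lra).
  rewrite !f1_eq_mul by assumption.
  replace (f s * g1 s / (f t * g1 t)) with ((f s / f t) * (g1 s / g1 t)) by (field; lra).
  eapply Rle_trans; [apply Rabs_mul_sub_le; lra |].
  pose proof (f_ratio_bound M t s y d ltac:(lra) ltac:(lra) hy hd hd2).
  pose proof (exp_pos y). pose proof (exp_le_mono y M hy).
  pose proof (Rabs_pos (g1 s / g1 t - 1)).
  rewrite (Rabs_pos_eq (exp y)) by lra.
  nra.
Qed.

End LogDerivative.

Theorem lemma2p6
  (f f1 f2 : R -> R) (t0 : R) (g g1 g2 : R -> R) (q : R) (p : Rbar)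
  (* f : [0,oo) -> [0,oo), continuously differentiable, f1 = f' *)
  (Hf_nonneg : forall t, 0 <= t -> 0 <= f t)
  (Hf_C1 : deriv_on_Ici f f1 0)
  (Hf1_cont : cont_on_Ici f1 0)
  (* t0 >= 0, f > 0 on [t0,oo), f in C^2([t0,oo)), f2 = f'' *)
  (Ht0 : 0 <= t0)
  (Hf_pos : forall t, t0 <= t -> 0 < f t)
  (Hf_C2 : deriv_on_Ici f1 f2 t0)
  (Hf2_cont : cont_on_Ici f2 t0)
  (* g = log f on [t0,oo), g1 = g', g2 = g'' on [t0,oo) *)
  (Hg : forall t, t0 <= t -> g t = ln (f t))
  (Hg1 : deriv_on_Ici g g1 t0)
  (Hg2 : deriv_on_Ici g1 g2 t0)
  (* (H1)(i) *)
  (Hg1_pos : forall t, t0 <= t -> 0 < g1 t)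
  (Hg2_pos : forall t, t0 <= t -> 0 < g2 t)
  (Hqp : (q = 1 /\ Rbar_lt (Finite 0) p) \/
         (1 < q /\ exists p', p = Finite p' /\ 0 < p'))
  (Hlim_q : is_lim (fun t => g1 t ^ 2 / (g t * g2 t)) p_infty q)
  (Hlim_p : is_lim (fun t => t * g1 t / g t) p_infty p)
  (* (H1)(ii) *)
  (Hq1 : q = 1 ->
     (forall s t, t0 <= s -> s <= t -> s * g1 s / g s <= t * g1 t / g t) /\
     exists (k : nat) (gh gh1 gh2 : R -> R),
       (1 <= k)%nat /\
       deriv_on_Ici gh gh1 t0 /\ deriv_on_Ici gh1 gh2 t0 /\
       cont_on_Ici gh2 t0 /\
       (forall t, t0 <= t -> f t = expk k (gh t)) /\
       (forall s t, t0 <= s -> s <= t -> gh1 t / gh t <= gh1 s / gh s)) :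
  forall M : R, 0 < M ->
    filterlim
      (fun t => sup_abs M (fun y => g (t + y / g1 t) - g t - y))
      (Rbar_locally p_infty) (Rbar_locally (Finite 0)) /\
    filterlim
      (fun t => sup_abs M (fun y => f (t + y / g1 t) / f t - exp y))
      (Rbar_locally p_infty) (Rbar_locally (Finite 0)) /\
    filterlim
      (fun t => sup_abs M (fun y => f1 (t + y / g1 t) / f1 t - exp y))
      (Rbar_locally p_infty) (Rbar_locally (Finite 0)).
Proof.
  intros M hM.
  destruct Hg1 as [g_deriv _], Hg2 as [g1_deriv _].
  assert (f_deriv : forall t, t0 < t -> is_derive f t (f1 t))
    by (intros; apply (proj1 Hf_C1); lra).
  assert (g1_pos : forall t, t0 < t -> 0 < g1 t) by (intros; apply Hg1_pos; lra).
  assert (g2_ge0 : forall t, t0 < t -> 0 <= g2 t) by (intros; apply Rlt_le, Hg2_pos; lra).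
  assert (hq : 1 <= q) by (destruct Hqp as [[-> _] | [? _]]; lra).
  destruct (ratio_bound_eventually t0 g g1 g2 g_deriv g1_deriv g1_pos g2_ge0 q hq Hlim_q)
    as [T1 [hT1 hratio]].
  pose proof (window_estimates_eventually t0 g g1 g2 g_deriv g1_deriv g1_pos g2_ge0
    T1 M hT1 hratio hM) as hwin.
  set (err := fun t => 4 * M / (g t - M)) in hwin.
  assert (herr : forall C, is_lim (fun t => C * err t) p_infty 0).
  { intros C. replace (Finite 0) with (Rbar_mult C 0) by (simpl; f_equal; ring).
    apply is_lim_scal_l, (is_lim_window_err t0 g g1 g2); assumption. }
  assert (half_pos : 0 < 1/2) by lra.
  pose proof (filter_and _ _ hwin (filter_and _ _
    (is_lim_0_eventually_le _ _ (herr M) half_pos)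
    (is_lim_0_eventually_le _ _ (herr 1) half_pos))) as hev.
  split; [| split].
  - apply (sup_abs_lim_0 _ M _ (fun t => M * err t)); [lra | | apply herr].
    revert hwin. apply filter_imp. intros t [_ hy] y hy'. apply (hy y hy').
  - apply (sup_abs_lim_0 _ M _ (fun t => 2 * exp M * M * err t)); [lra | | apply herr].
    revert hev. apply filter_imp. intros t [[ht hy] [hs1 hs2]] y hy'.
    destruct (hy y hy') as [hs [_ hg]].
    eapply Rle_trans; [apply (f_ratio_bound t0 f g Hf_pos Hg M t _ y (M * err t)); auto; lra |].
    right; ring.
  - apply (sup_abs_lim_0 _ M _ (fun t => exp M * (4 * M + 1) * err t)); [lra | | apply herr].
    revert hev. apply filter_imp. intros t [[ht hy] [hs1 hs2]] y hy'.
    destruct (hy y hy') as [hs [hg1 hg]].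
    eapply Rle_trans; [apply (f1_ratio_bound t0 f f1 g g1 Hf_pos f_deriv Hg g_deriv
      M t _ y (M * err t) (err t)); auto; lra |].
    right; ring.
Qed.
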